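(* Let $\{p_\theta:\theta\in\Omega\subseteq\mathbb{R}\}$ be DQM in a neighborhood of $0$ with score $T\in L^2(p_0)$ at $\theta=0$. Let $\mathcal F$ be a set of real-valued functions and suppose there is $B>0$ such that for every $f\in\mathcal F$: $\mathbb{E}_\theta f^2<B$ for all $\theta$ in a neighborhood of $0$, and $\mathbb{E}_0|f^2T|<B$, $\mathbb{E}_0|fT^2|<B$, $\mathbb{E}_0 f^2T^2<B$. Then as $\theta\to0$, $$\sup_{f\in\mathcal F}\big|\mathbb{E}_\theta f-(\mathbb{E}_0 f+\theta\,\mathbb{E}_0 fT)\big|=o(|\theta|).$$
   Context: DQM at $0$ with score $T$: $\sqrt{p_\theta(x)}=\sqrt{p_0(x)}(1+\theta T(x)/2)+r_\theta(x)$ with $\int r_\theta^2\,d\nu=o(\theta^2)$, densities taken with respect to a dominating measure $\nu$. $\mathbb{E}_\theta$ denotes expectation under $p_\theta$. *)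

From HB Require Import structures.
From mathcomp Require Import all_boot all_order all_algebra.
From mathcomp Require Import all_classical all_reals all_analysis.
Set Implicit Arguments. Unset Strict Implicit. Unset Printing Implicit Defensive.
Import Order.TTheory GRing.Theory Num.Theory.
Import numFieldNormedType.Exports.
Local Open Scope classical_set_scope.
Local Open Scope ring_scope.

Definition is_density {d} {X : measurableType d} {R : realType}
  (mu : {measure set X -> \bar R}) (q : X -> R) : Prop :=
  [/\ measurable_fun setT q, (forall x, 0 <= q x)
    & (\int[mu]_x (q x)%:E = 1)%E].

Definition Ex {d} {X : measurableType d} {R : realType}
  (mu : {measure set X -> \bar R}) (q : X -> R) (f : X -> R) : R :=
  fine (\int[mu]_x (f x * q x)%:E).

Definition DQM0 {d} {X : measurableType d} {R : realType}
  (mu : {measure set X -> \bar R}) (p : R -> X -> R) (T : X -> R) : Prop :=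
  forall e : R, 0 < e -> \forall t \near (0 : R),
    (\int[mu]_x (((Num.sqrt (p t x)
        - Num.sqrt (p 0 x) * (1 + t * T x / 2)) ^+ 2)%:E)
      <= (e * t ^+ 2)%:E)%E.

From HB Require Import structures.
From mathcomp Require Import all_boot all_order all_algebra.
From mathcomp Require Import all_classical all_reals all_analysis.
From mathcomp Require Import measurable_realfun ring lra.
(* Write s = sqrt p_t, s0 = sqrt p_0 and r = s - s0 (1 + t T / 2).  Then
   p_t - p_0 - t T p_0 = r (s + s0) + (t^2/4) T^2 s0^2 + (t/2) T s0 r, so that
   E_t f - E_0 f - t E_0 (f T) is the integral of f times this expression.
   Multiplied by |t|, each of the three terms is bounded pointwise by AM-GM by
   t^2 times a combination of r^2, f^2 p_t, f^2 p_0, |f T^2| p_0 and f^2 T^2 p_0.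
   Integrating, DQM (int r^2 <= dl t^2) and the uniform moment bound B give
   |E_t f - E_0 f - t E_0 (f T)| <= |t| (small constant), uniformly over F. *)

Set Implicit Arguments.
Unset Strict Implicit.
Unset Printing Implicit Defensive.

Import Order.TTheory GRing.Theory Num.Theory.
Import numFieldNormedType.Exports.
Local Open Scope classical_set_scope.
Local Open Scope ring_scope.

Section real_bounds.
Variable R : realFieldType.

Lemma normM_le_amgm (a b k : R) : 0 < k -> `|a * b| <= (k * a ^+ 2 + b ^+ 2 / k) / 2.
Proof.
move=> k_gt0; rewrite normrM -(real_normK (num_real a)) -(real_normK (num_real b)).
have : 0 <= (k * `|a| - `|b|) ^+ 2 / k by rewrite divr_ge0 ?sqr_ge0 ?ltW.
suff -> : (k * `|a| - `|b|) ^+ 2 / k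
          = k * `|a| ^+ 2 + `|b| ^+ 2 / k - 2 * (`|a| * `|b|) by lra.
by field; rewrite gt_eqF.
Qed.

Lemma dqm_sqr_expansion (t s s0 Tx r : R) : r = s - s0 * (1 + t * Tx / 2) ->
  s ^+ 2 - s0 ^+ 2 - t * Tx * s0 ^+ 2
  = r * (s + s0) + t ^+ 2 / 4 * Tx ^+ 2 * s0 ^+ 2 + t / 2 * (Tx * s0 * r).
Proof. by move->; field. Qed.

Lemma dqm_pointwise_bound (t c e s s0 Tx f r : R) : 0 < c -> 0 < e ->
  r = s - s0 * (1 + t * Tx / 2) ->
  `|t| * `|f * (s ^+ 2 - s0 ^+ 2 - t * Tx * s0 ^+ 2)| <=
   (c / 2 + t ^+ 2 / (4 * e)) * r ^+ 2
   + t ^+ 2 / c * (f ^+ 2 * s ^+ 2 + f ^+ 2 * s0 ^+ 2)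
   + `|t| ^+ 3 / 4 * (`|f * Tx ^+ 2| * s0 ^+ 2)
   + t ^+ 2 * e / 4 * (f ^+ 2 * Tx ^+ 2 * s0 ^+ 2).
Proof.
move=> c_gt0 e_gt0 /dqm_sqr_expansion ->.
have t2_ge0 : 0 <= t ^+ 2 := sqr_ge0 t.
have -> : `|t| * `|f * (r * (s + s0) + t ^+ 2 / 4 * Tx ^+ 2 * s0 ^+ 2
                             + t / 2 * (Tx * s0 * r))|
    = `|r * (t * f * (s + s0)) + t ^+ 3 / 4 * (f * Tx ^+ 2) * s0 ^+ 2
        + t ^+ 2 / 2 * (f * Tx * s0 * r)|.
  by rewrite -normrM; congr `|_|; ring.
have n4 : `|4^-1 : R| = 4^-1 by rewrite ger0_norm.
have first_term : `|r * (t * f * (s + s0))|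
    <= c / 2 * r ^+ 2 + t ^+ 2 / c * (f ^+ 2 * s ^+ 2 + f ^+ 2 * s0 ^+ 2).
  have := @normM_le_amgm r (t * f * (s + s0)) c c_gt0.
  have -> : (t * f * (s + s0)) ^+ 2 / c = t ^+ 2 * f ^+ 2 / c * (s + s0) ^+ 2 by ring.
  have : (s + s0) ^+ 2 <= 2 * (s ^+ 2 + s0 ^+ 2) by have := sqr_ge0 (s - s0); lra.
  have k_ge0 : 0 <= t ^+ 2 * f ^+ 2 / c.
    by rewrite divr_ge0 ?(ltW c_gt0) // mulr_ge0 ?sqr_ge0.
  move=> /(ler_wpM2l k_ge0).
  have -> : t ^+ 2 * f ^+ 2 / c * (2 * (s ^+ 2 + s0 ^+ 2))
    = 2 * (t ^+ 2 / c * (f ^+ 2 * s ^+ 2 + f ^+ 2 * s0 ^+ 2)) by ring.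
  lra.
have last_term : t ^+ 2 / 2 * `|f * Tx * s0 * r|
    <= t ^+ 2 * e / 4 * (f ^+ 2 * Tx ^+ 2 * s0 ^+ 2) + t ^+ 2 / (4 * e) * r ^+ 2.
  have := ler_wpM2l (divr_ge0 t2_ge0 (ler0n _ 2)) (@normM_le_amgm (f * Tx * s0) r e e_gt0).
  suff -> : t ^+ 2 / 2 * ((e * (f * Tx * s0) ^+ 2 + r ^+ 2 / e) / 2)
    = t ^+ 2 * e / 4 * (f ^+ 2 * Tx ^+ 2 * s0 ^+ 2) + t ^+ 2 / (4 * e) * r ^+ 2 by [].
  by field; rewrite gt_eqF.
apply: (le_trans (ler_normD _ _)); apply: (le_trans (lerD (ler_normD _ _) (lexx _))).
have -> : `|t ^+ 3 / 4 * (f * Tx ^+ 2) * s0 ^+ 2|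
          = `|t| ^+ 3 / 4 * (`|f * Tx ^+ 2| * s0 ^+ 2).
  by rewrite 3!normrM normrX n4 (ger0_norm (sqr_ge0 s0)); ring.
rewrite [X in _ + X <= _]normrM (ger0_norm (divr_ge0 t2_ge0 (ler0n _ 2))).
lra.
Qed.

(* [dl] is chosen so that [dl * (c / 2 + 1 / (4 * eta)) = e / 4]; each of the
   other three terms is at most [e / 4]. *)
Lemma dqm_rate_constants (B e : R) : 0 < B -> 0 < e ->
  exists c eta dl : R, [/\ 0 < c, 0 < eta, 0 < dl &
    forall t, `|t| < 1 -> `|t| < e / B ->
    (c / 2 + t ^+ 2 / (4 * eta)) * dl + 2 * B / c + `|t| * B / 4 + eta * B / 4 <= e].
Proof.
move=> B_gt0 e_gt0.
exists (8 * B / e), (e / B), (e ^+ 2 / (17 * B)).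
split; [by rewrite !divr_gt0 ?mulr_gt0 ?exprn_gt0 .. | move=> t t_lt1 t_lt].
have t2_le1 : t ^+ 2 <= 1.
  by rewrite -(real_normK (num_real t)) expr_le1 // ltW.
have tB_le : `|t| * B <= e by rewrite -ler_pdivlMr // ltW.
have -> : (8 * B / e / 2 + t ^+ 2 / (4 * (e / B))) * (e ^+ 2 / (17 * B))
          = (16 + t ^+ 2) / 68 * e by field; rewrite !gt_eqF.
have -> : 2 * B / (8 * B / e) = e / 4 by field; rewrite !gt_eqF.
have -> : e / B * B / 4 = e / 4 by field; rewrite !gt_eqF.
have : (16 + t ^+ 2) / 68 * e <= 17 / 68 * e by apply: ler_wpM2r; [exact: ltW | lra].
lra.
Qed.

End real_bounds.

Section dqm_integrals.
Context d (X : measurableType d) (R : realType) (mu : {measure set X -> \bar R}).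

Ltac measurable_tac := repeat first
  [ exact: measurable_cst | assumption
  | apply: measurable_funM | apply: measurable_funD
  | apply: measurable_funB | apply: measurable_funN | apply: measurable_funX
  | (apply: measurableT_comp; [exact: normr_measurable|])
  | (apply: measurableT_comp;
       [exact: continuous_measurable_fun (@sqrt_continuous R)|]) ].

Lemma ge0_integrable (h : X -> R) : measurable_fun setT h -> (forall x, 0 <= h x) ->
  (\int[mu]_x (h x)%:E < +oo)%E -> mu.-integrable setT (EFin \o h).
Proof.
move=> mh h_ge0 h_lty; apply/integrableP; split; first exact/measurable_EFinP.
by rewrite (eq_integral (fun x => (h x)%:E)) // => x _; rewrite /= ger0_norm.
Qed.

Lemma integrable_mul_density (Q w : X -> R) : is_density mu Q ->
  measurable_fun setT w -> (\int[mu]_x (w x ^+ 2 * Q x)%:E < +oo)%E ->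
  mu.-integrable setT (EFin \o (fun x => w x * Q x)).
Proof.
move=> [mQ Q_ge0 Q1] mw w2Q_lty.
have w2Q_ge0 x : 0 <= w x ^+ 2 * Q x by rewrite mulr_ge0 ?sqr_ge0.
have iQ : mu.-integrable setT (EFin \o Q) by apply: ge0_integrable; rewrite ?Q1 ?ltry.
have iw2Q : mu.-integrable setT (EFin \o (fun x => w x ^+ 2 * Q x)).
  by apply: ge0_integrable => //; measurable_tac.
apply: (le_integrable measurableT _ _ (integrableD measurableT iQ iw2Q)).
  by apply/measurable_EFinP; measurable_tac.
move=> x _ /=; rewrite lee_fin normrM [`|Q x|]ger0_norm // [X in _ <= X]ger0_norm ?addr_ge0 //.
have : `|w x| <= 1 + w x ^+ 2.
  by rewrite -(real_normK (num_real (w x))); have := sqr_ge0 (`|w x| - 1); nra.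
by move=> /(ler_wpM2r (Q_ge0 x)); rewrite mulrDl mul1r.
Qed.

Lemma ge0_integralZl_le (k b : R) (h : X -> R) : 0 <= k ->
  measurable_fun setT h -> (forall x, 0 <= h x) ->
  (\int[mu]_x (h x)%:E <= b%:E)%E -> (\int[mu]_x (k * h x)%:E <= (k * b)%:E)%E.
Proof.
move=> k_ge0 mh h_ge0 hb.
under eq_integral do rewrite EFinM.
rewrite ge0_integralZl_EFin //; last exact/measurable_EFinP.
  by rewrite EFinM lee_wpmul2l ?lee_fin.
by move=> x _; rewrite lee_fin.
Qed.

Lemma ge0_integralD_le (b1 b2 : R) (h1 h2 : X -> R) :
  measurable_fun setT h1 -> measurable_fun setT h2 ->
  (forall x, 0 <= h1 x) -> (forall x, 0 <= h2 x) ->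
  (\int[mu]_x (h1 x)%:E <= b1%:E)%E -> (\int[mu]_x (h2 x)%:E <= b2%:E)%E ->
  (\int[mu]_x (h1 x + h2 x)%:E <= (b1 + b2)%:E)%E.
Proof.
move=> mh1 mh2 h1_ge0 h2_ge0 hb1 hb2.
under eq_integral do rewrite EFinD.
rewrite ge0_integralD ?EFinD ?leeD //;
  by [exact/measurable_EFinP | move=> x _; rewrite lee_fin].
Qed.

Lemma Ex_sub_Ex_linear (P Q T f : X -> R) (t : R) :
  mu.-integrable setT (EFin \o (fun x => f x * P x)) ->
  mu.-integrable setT (EFin \o (fun x => f x * Q x)) ->
  mu.-integrable setT (EFin \o (fun x => f x * T x * Q x)) ->
  (Ex mu P f - (Ex mu Q f + t * Ex mu Q (fun x => f x * T x)))%:E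
  = (\int[mu]_x (f x * (P x - Q x - t * T x * Q x))%:E)%E.
Proof.
move=> iP iQ iTQ.
have itTQ : mu.-integrable setT (EFin \o (fun x => t * (f x * T x * Q x))).
  apply: (eq_integrable measurableT _ _ _ (integrableZl measurableT t iTQ)) => x _.
  by rewrite /= EFinM.
have iD : mu.-integrable setT
    (EFin \o (fun x => f x * Q x + t * (f x * T x * Q x))).
  apply: (eq_integrable measurableT _ _ _ (integrableD measurableT iQ itTQ)) => x _.
  by rewrite /= EFinD.
have iB : mu.-integrable setT
    (EFin \o (fun x => f x * P x - (f x * Q x + t * (f x * T x * Q x)))).
  apply: (eq_integrable measurableT _ _ _ (integrableB measurableT iP iD)) => x _.
  by rewrite /= EFinB.
rewrite (eq_integral (fun x => (f x * P x - (f x * Q x + t * (f x * T x * Q x)))%:E));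
  last by move=> x _; congr EFin; ring.
move/fineK: (integrable_fin_num measurableT iB) => /= <-.
congr (_%:E); rewrite -[LHS]/(Rintegral mu setT _ - (Rintegral mu setT _
  + t * Rintegral mu setT (fun x => f x * T x * Q x))).
rewrite -(RintegralZl t measurableT iTQ) -(RintegralD measurableT iQ itTQ).
exact: esym (RintegralB measurableT iP iD).
Qed.

Ltac nonneg_tac := repeat first
  [ done | exact: sqr_ge0 | exact: normr_ge0 | assumption | (apply: ltW; assumption)
  | apply: addr_ge0 | apply: mulr_ge0 | rewrite invr_ge0 | apply: exprn_ge0
  | match goal with H : forall y, 0 <= _ |- _ => apply: H end ].

Lemma Ex_dqm_remainder_le (P Q T f : X -> R) (t c e dl B : R) :
  is_density mu P -> is_density mu Q ->
  measurable_fun setT T -> measurable_fun setT f -> 0 < c -> 0 < e ->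
  (\int[mu]_x ((Num.sqrt (P x) - Num.sqrt (Q x) * (1 + t * T x / 2)) ^+ 2)%:E
     <= (dl * t ^+ 2)%:E)%E ->
  (\int[mu]_x (f x ^+ 2 * P x)%:E <= B%:E)%E ->
  (\int[mu]_x (f x ^+ 2 * Q x)%:E <= B%:E)%E ->
  (\int[mu]_x (`|f x * T x ^+ 2| * Q x)%:E <= B%:E)%E ->
  (\int[mu]_x (f x ^+ 2 * T x ^+ 2 * Q x)%:E <= B%:E)%E ->
  `|t| * `|Ex mu P f - (Ex mu Q f + t * Ex mu Q (fun x => f x * T x))|
  <= t ^+ 2 * ((c / 2 + t ^+ 2 / (4 * e)) * dl + 2 * B / c + `|t| * B / 4 + e * B / 4).
Proof.
move=> dP dQ mT mf c_gt0 e_gt0 r2_le f2P_le f2Q_le fT2Q_le f2T2Q_le.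
have [[mP P_ge0 _] [mQ Q_ge0 _]] := (dP, dQ).
have iP := integrable_mul_density dP mf (le_lt_trans f2P_le (ltry B)).
have iQ := integrable_mul_density dQ mf (le_lt_trans f2Q_le (ltry B)).
have iTQ : mu.-integrable setT (EFin \o (fun x => f x * T x * Q x)).
  apply: integrable_mul_density => //; first by measurable_tac.
  by under eq_integral do rewrite exprMn; exact: le_lt_trans f2T2Q_le (ltry B).
pose r x := Num.sqrt (P x) - Num.sqrt (Q x) * (1 + t * T x / 2).
have mr : measurable_fun setT r by rewrite /r; measurable_tac.
pose g x := f x * (P x - Q x - t * T x * Q x).
have mg : measurable_fun setT (EFin \o g) by apply/measurable_EFinP; measurable_tac.
rewrite -lee_fin EFinM -[`|_ - _|%:E]abse_EFin Ex_sub_Ex_linear //.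
apply: le_trans (lee_wpmul2l _ (le_abse_integral mu measurableT mg)) _.
  by rewrite lee_fin.
rewrite -ge0_integralZl_EFin //; last exact: measurableT_comp.
apply: (@le_trans _ _ (\int[mu]_x ((c / 2 + t ^+ 2 / (4 * e)) * r x ^+ 2
    + t ^+ 2 / c * (f x ^+ 2 * P x + f x ^+ 2 * Q x)
    + `|t| ^+ 3 / 4 * (`|f x * T x ^+ 2| * Q x)
    + t ^+ 2 * e / 4 * (f x ^+ 2 * T x ^+ 2 * Q x))%:E)%E).
  apply: ge0_le_integral => //.
  - by apply: measurable_funeM; exact: measurableT_comp.
  - by apply/measurable_EFinP; measurable_tac.
  move=> x _; rewrite /= -EFinM lee_fin.
  have := @dqm_pointwise_bound _ t c e (Num.sqrt (P x)) (Num.sqrt (Q x)) (T x) (f x) (r x)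
    c_gt0 e_gt0 erefl.
  by rewrite !sqr_sqrtr.
apply: (@le_trans _ _ ((c / 2 + t ^+ 2 / (4 * e)) * (dl * t ^+ 2) + t ^+ 2 / c * (B + B)
    + `|t| ^+ 3 / 4 * B + t ^+ 2 * e / 4 * B)%:E); last first.
  rewrite lee_fin le_eqVlt; apply/orP; left; apply/eqP.
  by rewrite -[t ^+ 2](real_normK (num_real t)); field; rewrite !gt_eqF.
repeat apply: ge0_integralD_le; try by [measurable_tac | move=> x; nonneg_tac].
all: apply: ge0_integralZl_le; try by [measurable_tac | nonneg_tac | move=> x; nonneg_tac].
by apply: ge0_integralD_le; try by [measurable_tac | move=> x; nonneg_tac].
Qed.

End dqm_integrals.

Theorem lemma3 (d : measure_display) (X : measurableType d) (R : realType)
  (mu : {measure set X -> \bar R}) (p : R -> X -> R) (T : X -> R)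
  (F : set (X -> R)) :
  (* the model is a family of probability densities on a neighbourhood of 0 *)
  (\forall t \near (0 : R), is_density mu (p t)) ->
  (* DQM at 0 with score T, and T in L^2(p_0) *)
  DQM0 mu p T ->
  measurable_fun setT T ->
  (\int[mu]_x ((T x ^+ 2 * p 0 x)%:E) < +oo)%E ->
  (* the function class *)
  (forall f, F f -> measurable_fun setT f) ->
  (exists2 B : R, 0 < B &
     (\forall t \near (0 : R), forall f, F f ->
        (\int[mu]_x ((f x ^+ 2 * p t x)%:E) < B%:E)%E) /\
     (forall f, F f ->
        [/\ (\int[mu]_x ((`|f x ^+ 2 * T x| * p 0 x)%:E) < B%:E)%E,
            (\int[mu]_x ((`|f x * T x ^+ 2| * p 0 x)%:E) < B%:E)%E
          & (\int[mu]_x ((f x ^+ 2 * T x ^+ 2 * p 0 x)%:E) < B%:E)%E])) ->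
  (* sup_{f in F} |E_t f - (E_0 f + t E_0 fT)| = o(|t|) as t -> 0 *)
  forall e : R, 0 < e -> \forall t \near (0 : R), forall f, F f ->
    `| Ex mu (p t) f - (Ex mu (p 0) f + t * Ex mu (p 0) (fun x => f x * T x)) |
      <= e * `|t|.
Proof.
move=> density_near dqm mT _ mF [B B_gt0 [f2_near f_bounds]] e e_gt0.
have [c [eta [dl [c_gt0 eta_gt0 dl_gt0 rate_le]]]] := dqm_rate_constants B_gt0 e_gt0.
have density0 := nbhs_singleton density_near.
have f2_0 := nbhs_singleton f2_near.
have remainder_near := dqm dl dl_gt0.
have t_lt1 := nbhs0_lt (K := R) (V := R^o) ltr01.
have t_lt := nbhs0_lt (K := R) (V := R^o) (divr_gt0 e_gt0 B_gt0).
near=> t => f Ff.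
have [-> | t_neq0] := eqVneq t 0.
  by rewrite mul0r addr0 subrr normr0 mulr0.
have [_ fT2_lt f2T2_lt] := f_bounds f Ff.
have f2_t : forall g, F g -> (\int[mu]_x (g x ^+ 2 * p t x)%:E < B%:E)%E by near: t.
have t_norm_gt0 : 0 < `|t| by rewrite normr_gt0.
rewrite -(ler_pM2l t_norm_gt0).
apply: le_trans (Ex_dqm_remainder_le (dl := dl) (B := B) _ _ mT (mF f Ff) c_gt0 eta_gt0
    _ _ _ _ _) _.
- by near: t.
- exact: density0.
- by near: t.
- by apply/ltW/f2_t.
- exact/ltW/f2_0.
- exact: ltW fT2_lt.
- exact: ltW f2T2_lt.
rewrite [X in _ <= X]mulrCA -expr2 real_normK ?num_real // [X in _ <= X]mulrC.
by apply: ler_wpM2l; [exact: sqr_ge0 | apply: rate_le; near: t].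
Unshelve. all: by end_near.
Qed.
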